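(* For all positive integers $k$ and $r$ there exists $q_0$ such that the following holds for every $q\ge q_0$. Let $\mathcal H$ be a 3-graph containing a copy $S$ of $S_q^3$, and suppose that to each of the $3q$ edges (2-subsets) $e$ contained in the hyperedges of $S$ an integer $w(e)$ with $0\le w(e)\le k$ is assigned such that $e$ is contained in at least $w(e)+1$ hyperedges of $\mathcal H$. Then some $r$ of the hyperedges of $S$ form a copy $S'$ of $S_r^3$ which is nice, i.e., for each edge $e$ contained in a hyperedge of $S'$, the link set of $e$ in $\mathcal H$ contains at least $w(e)$ vertices not belonging to $V(S')$.
   Context: $S_q^3$ denotes the 3-graph consisting of $q$ hyperedges that pairwise share exactly one common vertex (the center) and are otherwise disjoint. The link set of a pair $e=\{a,b\}$ in a 3-graph $\mathcal H$ is the set of vertices $c$ such that $\{a,b,c\}$ is a hyperedge of $\mathcal H$. *)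

From mathcomp Require Import all_boot.
Set Implicit Arguments. Unset Strict Implicit. Unset Printing Implicit Defensive.

Definition three_graph (V : finType) (H : {set {set V}}) : Prop :=
  forall h, h \in H -> #|h| = 3.

Definition is_star (V : finType) (q : nat) (c : V) (S : {set {set V}}) : Prop :=
  [/\ #|S| = q,
      (forall h, h \in S -> #|h| = 3),
      (forall h, h \in S -> c \in h) &
      (forall h1 h2, h1 \in S -> h2 \in S -> h1 != h2 -> h1 :&: h2 = [set c])].

Definition edge_of (V : finType) (S : {set {set V}}) (e : {set V}) : Prop :=
  #|e| = 2 /\ exists2 h, h \in S & e \subset h.

Definition vset (V : finType) (S : {set {set V}}) : {set V} :=
  \bigcup_(h in S) h.

Definition link (V : finType) (H : {set {set V}}) (e : {set V}) : {set V} :=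
  [set v | (v |: e) \in H].

Definition codeg (V : finType) (H : {set {set V}}) (e : {set V}) : nat :=
  #|[set h in H | e \subset h]|.

(** Each hyperedge h of the star reserves, for each of its three edges e, a set of
   w(e) vertices of the link of e lying outside h; this is possible because the link
   of e meets h only in the third vertex of h.  Thus h reserves at most 3k vertices,
   none of them the centre.  Since distinct hyperedges of the star meet only in the
   centre, at most 3k hyperedges meet the reserved set of h.  In the digraph "h'
   meets the vertices reserved by h" every vertex has out-degree at most 3k, so a
   greedy argument yields r pairwise non-adjacent hyperedges once q >= r(6k+1); they
   form a nice copy of S_r^3 because each one's reserved vertices avoid all of them. *)

From mathcomp Require Import all_boot zify.

Set Implicit Arguments.
Unset Strict Implicit.
Unset Printing Implicit Defensive.

Definition draw (T : finType) (B : {set T}) (n : nat) : {set T} :=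
  odflt set0 [pick A : {set T} | (A \subset B) && (#|A| == n)].

Lemma drawP (T : finType) (B : {set T}) (n : nat) :
  n <= #|B| -> draw B n \subset B /\ #|draw B n| = n.
Proof.
move=> le_nB; rewrite /draw; case: pickP => [A /andP[sAB /eqP //] | noA].
have : 0 < #|[set A : {set T} | A \subset B & #|A| == n]|.
  by rewrite cards_draws bin_gt0.
by case/card_gt0P => A; rewrite inE noA.
Qed.

Lemma card_bigcup_leq (T I : finType) (P : pred I) (F : I -> {set T}) :
  #|\bigcup_(i | P i) F i| <= \sum_(i | P i) #|F i|.
Proof.
elim/big_rec2: _ => [|i n A _ le_An]; first by rewrite cards0.
by rewrite (leq_trans (leq_card_setU _ _)) ?leq_add2l.
Qed.

Lemma card_setId_sum (T : finType) (A : {set T}) (P : pred T) :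
  #|[set y in A | P y]| = \sum_(y in A) P y.
Proof. by rewrite -sum1dep_card big_mkcondr. Qed.

Section DegreeBoundedDigraph.

Variables (T : finType) (E : rel T) (d : nat).

Definition out_nbhd (A : {set T}) (x : T) : {set T} := [set y in A | E x y].
Definition in_nbhd (A : {set T}) (x : T) : {set T} := [set y in A | E y x].

Lemma sum_card_in_nbhd (A : {set T}) :
  \sum_(x in A) #|in_nbhd A x| = \sum_(x in A) #|out_nbhd A x|.
Proof.
under eq_bigr do rewrite card_setId_sum.
by rewrite exchange_big; under eq_bigr do rewrite -card_setId_sum.
Qed.

Lemma low_degree_vertex (A : {set T}) :
  {in A, forall x, #|out_nbhd A x| <= d} -> 0 < #|A| ->
  exists2 x, x \in A & #|out_nbhd A x| + #|in_nbhd A x| <= d.*2.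
Proof.
move=> outA A_gt0.
have [x /andP[xA low] | high] :=
  pickP [pred x in A | #|out_nbhd A x| + #|in_nbhd A x| <= d.*2].
  by exists x.
have sum_out : \sum_(x in A) #|out_nbhd A x| <= #|A| * d.
  by rewrite -sum_nat_const leq_sum.
have : \sum_(x in A) d.*2.+1 <= \sum_(x in A) (#|out_nbhd A x| + #|in_nbhd A x|).
  by apply: leq_sum => x xA; have := high x; rewrite /= xA /= ltnNge => ->.
rewrite big_split /= sum_card_in_nbhd sum_nat_const.
lia.
Qed.

Lemma independent_subset (n : nat) (A : {set T}) :
  {in A, forall x, #|out_nbhd A x| <= d} -> n * d.*2.+1 <= #|A| ->
  exists2 B : {set T}, (B \subset A) && (#|B| == n) &
    {in B &, forall x y, x != y -> ~~ E x y}.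
Proof.
elim: n A => [|n IHn] A outA cardA.
  by exists set0; rewrite ?sub0set ?cards0 // => x y; rewrite inE.
have [|x xA lowx] := low_degree_vertex outA.
  by move: cardA; rewrite mulSn; lia.
pose R := x |: (out_nbhd A x :|: in_nbhd A x).
have sARA : A :\: R \subset A by apply: subsetDl.
have [||B /andP[sBA /eqP cardB] indepB] := IHn (A :\: R).
- move=> y /setDP[yA _]; apply: leq_trans (outA y yA).
  by apply: subset_leq_card; apply/subsetP => z; rewrite !inE => /andP[/andP[_ ->] ->].
- have : #|R| <= d.*2.+1 by rewrite cardsU1 (leq_trans (leq_add (leq_b1 _) (leq_card_setU _ _))).
  by rewrite cardsD; have := subset_leq_card (subsetIr A R); move: cardA; rewrite mulSn; lia.
have xR : x \in R by rewrite setU11.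
have farR y : y \in B -> ~~ E x y && ~~ E y x.
  by move=> /(subsetP sBA) /setDP[yA]; rewrite !inE yA /= !negb_or => /and3P[_ -> ->].
have xB : x \notin B by apply: contraL xR => /(subsetP sBA) /setDP[].
exists (x |: B).
  by rewrite subUset sub1set xA (subset_trans sBA sARA) cardsU1 cardB xB add1n eqxx.
move=> y z /setU1P[-> | yB] /setU1P[-> | zB]; rewrite ?eqxx //.
- by case/andP: (farR z zB).
- by case/andP: (farR y yB).
- exact: indepB.
Qed.

End DegreeBoundedDigraph.

Lemma codeg_leq_card_link (V : finType) (H : {set {set V}}) (e : {set V}) :
  three_graph H -> #|e| = 2 -> codeg H e <= #|link H e|.
Proof.
move=> H3 e2; apply: leq_trans (leq_imset_card (fun v => v |: e) (link H e)).
apply/subset_leq_card/subsetP => h; rewrite inE => /andP[hH seh].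
have /cards1P[v hDe] : #|h :\: e| == 1 by rewrite cardsD (setIidPr seh) H3 // e2.
have hve : h = v |: e by rewrite -{1}(setID h e) (setIidPr seh) hDe setUC.
by apply/imsetP; exists v; rewrite // inE -hve.
Qed.

Lemma card_link_leq_setD (V : finType) (H : {set {set V}}) (e h : {set V}) :
  three_graph H -> #|e| = 2 -> #|h| = 3 -> e \subset h ->
  #|link H e| <= #|link H e :\: h| + 1.
Proof.
move=> H3 e2 h3 seh.
have sub : link H e :&: h \subset h :\: e.
  apply/subsetP => v; rewrite !inE => /andP[ve_H vh]; rewrite vh andbT.
  by apply/negP => ve; move/H3: ve_H; rewrite (setUidPr _) ?sub1set // e2.
have := subset_leq_card sub; rewrite cardsD (setIidPr seh) h3 e2 [#|link H e :\: h|]cardsD.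
lia.
Qed.

Lemma is_star_subset (V : finType) (q : nat) (c : V) (S S' : {set {set V}}) :
  S' \subset S -> is_star q c S -> is_star #|S'| c S'.
Proof.
move=> /subsetP sS'S [_ S3 Sc Smeet]; split=> // [h|h|h1 h2] /sS'S; first exact: S3.
  exact: Sc.
by move=> h1S /sS'S; apply: Smeet.
Qed.

Section Reservation.

Variables (V : finType) (H S : {set {set V}}) (c : V) (q k : nat).
Variable w : {set V} -> nat.
Hypotheses (H3 : three_graph H) (Sstar : is_star q c S).
Hypothesis Sw : forall e, edge_of S e -> w e <= k /\ w e + 1 <= codeg H e.

Definition reserve (h e : {set V}) : {set V} := draw (link H e :\: h) (w e).

Definition reserved (h : {set V}) : {set V} :=
  \bigcup_(e : {set V} | (e \subset h) && (#|e| == 2)) reserve h e.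

Definition clashes : rel {set V} := fun h h' => ~~ [disjoint reserved h & h'].

Lemma reserveP (h e : {set V}) : h \in S -> e \subset h -> #|e| = 2 ->
  reserve h e \subset link H e :\: h /\ #|reserve h e| = w e.
Proof.
move=> hS seh e2; apply: drawP; case: Sstar => _ S3 _ _.
have [_] : w e <= k /\ w e + 1 <= codeg H e by apply: Sw; split=> //; exists h.
have := codeg_leq_card_link H3 e2; have := card_link_leq_setD H3 e2 (S3 h hS) seh.
lia.
Qed.

Lemma disjoint_reserved (h : {set V}) : h \in S -> [disjoint h & reserved h].
Proof.
move=> hS; apply: bigcup_disjoint => e /andP[seh /eqP e2].
have [/subsetDP[_ disj] _] := reserveP hS seh e2.
by rewrite disjoint_sym.
Qed.

Lemma card_reserved (h : {set V}) : h \in S -> #|reserved h| <= 3 * k.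
Proof.
move=> hS; case: Sstar => _ S3 _ _.
apply: leq_trans (card_bigcup_leq _ _) _.
apply: (@leq_trans (\sum_(e : {set V} | (e \subset h) && (#|e| == 2)) k)).
  apply: leq_sum => e /andP[seh /eqP e2]; rewrite (reserveP hS seh e2).2.
  by case: (@Sw e) => //; split=> //; exists h.
by rewrite sum_nat_cond_const cards_draws S3 // mulnC.
Qed.

Lemma card_clashes (h : {set V}) : h \in S -> #|out_nbhd clashes S h| <= 3 * k.
Proof.
move=> hS; case: Sstar => _ _ Sc Smeet; rewrite /out_nbhd.
pose meet h' := odflt c [pick v in reserved h :&: h'].
have meetP h' : clashes h h' -> meet h' \in reserved h :&: h'.
  rewrite /clashes -setI_eq0 => /set0Pn[v vRh']; rewrite /meet.
  by case: pickP => [// | /(_ v)]; rewrite vRh'.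
rewrite -(@card_in_imset _ _ meet); last first.
  move=> h1 h2; rewrite !inE => /andP[h1S c1] /andP[h2S c2] m12.
  have /setIP[Rm1 m1h1] := meetP _ c1; have /setIP[_ m2h2] := meetP _ c2.
  apply/eqP; apply: contraTT Rm1 => ne12.
  have : meet h1 \in h1 :&: h2 by rewrite inE m1h1 m12 m2h2.
  rewrite Smeet // => /set1P->.
  by rewrite (disjointFr (disjoint_reserved hS)) ?Sc.
apply: leq_trans (card_reserved hS); apply/subset_leq_card/subsetP => _ /imsetP[h' +->].
by rewrite inE => /andP[_ /meetP /setIP[]].
Qed.

Lemma nice_of_clash_free (S' : {set {set V}}) : S' \subset S ->
  {in S' &, forall h h', h != h' -> ~~ clashes h h'} ->
  forall e, edge_of S' e -> w e <= #|link H e :\: vset S'|.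
Proof.
move=> /subsetP sS'S free e [e2 [h hS' seh]].
have [/subsetP reserve_sub <-] := reserveP (sS'S h hS') seh e2.
apply/subset_leq_card/subsetP => v ve; have /setDP[vl vNh] := reserve_sub v ve.
rewrite inE vl andbT; apply/bigcupP => -[h' h'S' vh'].
have ne : h != h' by apply: contraNneq vNh => ->.
have vR : v \in reserved h by apply/bigcupP; exists e; rewrite ?seh ?e2.
have /negP := free h h' hS' h'S' ne; apply.
by apply/negP => /disjointFl/(_ vh'); rewrite vR.
Qed.

End Reservation.

Theorem lemma2 :
  forall k r : nat, 0 < k -> 0 < r ->
  exists q0 : nat, forall q : nat, q0 <= q ->
  forall (V : finType) (H S : {set {set V}}) (c : V) (w : {set V} -> nat),
    three_graph H ->
    S \subset H ->
    is_star q c S ->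
    (forall e, edge_of S e -> w e <= k /\ w e + 1 <= codeg H e) ->
    exists S' : {set {set V}},
      [/\ S' \subset S,
          is_star r c S' &
          forall e, edge_of S' e -> w e <= #|link H e :\: vset S'|].
Proof.
move=> k r _ _; exists (r * (3 * k).*2.+1) => q le_q V H S c w H3 _ Sstar Sw.
have [||S' /andP[sS'S /eqP cardS'] free] := @independent_subset _ (clashes H w) (3 * k) r S.
- exact: card_clashes H3 Sstar Sw.
- by case: Sstar => ->.
exists S'; split=> //; last by move=> e; apply: (nice_of_clash_free H3 Sstar Sw sS'S free).
by rewrite -cardS'; apply: is_star_subset sS'S Sstar.
Qed.
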